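(* Let $2\le k<m$ be integers. Then \[ \mathbf{m}\left(\mathrm{Alt}(m)\circlearrowright\binom{[m]}{k}\right)\le\mathbf{m}\left(\mathrm{Sym}(m)\circlearrowright\binom{[m]}{k}\right)\le\binom{m-\lfloor k/2\rfloor}{\lceil k/2\rceil}. \] Consequently, for fixed $k$, if $\mathcal{C}_k$ is the family of symmetric (or alternating) groups $\mathrm{Sym}(m)$ (or $\mathrm{Alt}(m)$), $m>k$, acting on $k$-subsets of $[m]$, then \[ \lim_n\frac{\mathbf{F}_{\mathcal{C}_k}(n)}{\sqrt n}\le\frac{\sqrt{k!}}{(k/2)!}\quad\text{for } k \text{ even},\qquad \lim_n\frac{\mathbf{F}_{\mathcal{C}_k}(n)}{n^{\frac{k+1}{2k}}}\le\frac{k!^{\frac{k+1}{2k}}}{\lceil k/2\rceil!}\quad\text{for } k\text{ odd}. \]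
   Context: $[m]=\{1,\dots,m\}$, $\binom{[m]}{k}$ is the set of $k$-subsets of $[m]$, and $X\circlearrowright\binom{[m]}{k}$ is the permutation group induced by the natural action of $X\in\{\mathrm{Alt}(m),\mathrm{Sym}(m)\}$ on $k$-subsets (degree $n=\binom mk$). For a transitive permutation group $X$ on a finite set $\Omega$ with $|\Omega|\ge2$, a subset $A\subseteq\Omega$ is self-separable for $X$ if there exists $x\in X$ with $A\cap A^x=\emptyset$; $\mathbf{m}(X)$ is the minimum cardinality of a non-self-separable subset. For a family $\mathcal{C}$ of transitive groups, $\mathbf{F}_{\mathcal{C}}(n)=\max\{\mathbf{m}(X):X\in\mathcal{C}\text{ of degree } n\}$ for the degrees $n$ occurring in $\mathcal{C}$, and limits are over such $n$. *)

From HB Require Import structures.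
From mathcomp Require Import all_boot all_order all_algebra all_fingroup.
From mathcomp Require Import alt.
From mathcomp Require Import reals exp.

Set Implicit Arguments.
Unset Strict Implicit.
Unset Printing Implicit Defensive.

Definition ksubsets (m k : nat) : {set {set 'I_m}} := [set A : {set 'I_m} | #|A| == k].

Definition act_fam (m : nat) (g : {perm 'I_m}) (S : {set {set 'I_m}})
  : {set {set 'I_m}} := [set (fun a => g a) @: A | A : {set 'I_m} in S].

Definition self_separable (m : nat) (G : {set {perm 'I_m}})
  (S : {set {set 'I_m}}) : bool :=
  [exists g in G, [disjoint S & act_fam g S]].

(* m(X) for X = G acting on k-subsets of [m]: the minimum cardinality of a
   non-self-separable subset of Omega.  (The default #|Omega| is attained,
   since Omega itself is non-self-separable whenever it is nonempty.) *)
Definition mnum (m k : nat) (G : {set {perm 'I_m}}) : nat :=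
  \big[minn/#|ksubsets m k|]_(S : {set {set 'I_m}} |
        (S \subset ksubsets m k) && ~~ self_separable G S) #|S|.

Definition mSym (m k : nat) : nat := mnum k (Sym ('I_m)).
Definition mAlt (m k : nat) : nat := mnum k (Alt ('I_m)).

(* F_C(n) for C = { X_m acting on k-subsets of [m] : m > k }, where
   mX m k = m(X_m on k-subsets).  Every such group has degree 'C(m,k) >= m,
   so the members of degree n have m <= n. *)
Definition Ffam (mX : nat -> nat -> nat) (k n : nat) : nat :=
  \max_(m < n.+1 | (k < m) && ('C(m, k) == n)) mX m k.

Definition is_degree (k n : nat) : Prop := exists2 m, k < m & 'C(m, k) = n.

(* Fix a set [H] of [h = k/2] points and let [S] be the family of [k]-sets
   containing [H].  For any permutation [g], the set [H :|: g H] has at most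
   [k] points, so some [k]-set contains it; that set lies in both [S] and
   [g S].  Hence [S] is not self-separable, and
   [#|S| = 'C(m - h, k - h) = 'C(m - k/2, uphalf k)].
   For the asymptotics, with [n = 'C(m, k)], multiply by the factorials to get
   falling factorials: for [k = 2h] the bound follows from
   [((m - h) ^_ h) ^ 2 <= m ^_ 2h], and for [k = 2h + 1] from
   [((m - h) ^_ (h + 1)) ^ (2h + 1) <= (m ^_ (2h + 1)) ^ (h + 1)].  These hold
   for every [m], so the limit bounds hold for every degree [n], not only
   eventually. *)

From HB Require Import structures.
From mathcomp Require Import all_boot all_order all_algebra all_fingroup.
From mathcomp Require Import alt.
From mathcomp Require Import reals exp.
From mathcomp Require Import zify.

Set Implicit Arguments.
Unset Strict Implicit.
Unset Printing Implicit Defensive.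

Import Order.TTheory GRing.Theory Num.Theory.

Lemma mnum_le_card m k (G : {set {perm 'I_m}}) (S : {set {set 'I_m}}) :
  S \subset ksubsets m k -> ~~ self_separable G S -> mnum k G <= #|S|.
Proof. by move=> SK nS; apply: (@bigmin_le_cond _ nat); rewrite SK nS. Qed.

Lemma self_separableS m (G H : {set {perm 'I_m}}) (S : {set {set 'I_m}}) :
  G \subset H -> self_separable G S -> self_separable H S.
Proof.
move=> sGH /exists_inP[g Gg dis]; apply/exists_inP.
by exists g; first exact: subsetP Gg.
Qed.

Lemma mnumS m k (G H : {set {perm 'I_m}}) : G \subset H -> mnum k G <= mnum k H.
Proof.
move=> sGH; rewrite /mnum; set K := #|ksubsets m k|.
apply: (@sub_bigmin _ nat K) => S /andP[SK nS].
by rewrite SK; apply: contra nS; apply: self_separableS.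
Qed.

Lemma mAlt_le_mSym m k : mAlt m k <= mSym m k.
Proof. exact/mnumS/Alt_subset. Qed.

Lemma exists_superset (T : finType) (U : {set T}) k :
  #|U| <= k <= #|T| -> exists2 A : {set T}, U \subset A & #|A| = k.
Proof.
case/andP=> Uk kT.
have : 0 < #|[set B : {set T} | B \subset ~: U & #|B| == k - #|U|]|.
  by rewrite cards_draws bin_gt0; have := cardsC U; lia.
case/card_gt0P=> B; rewrite inE => /andP[BU /eqP cB].
exists (U :|: B); first exact: subsetUl.
rewrite cardsU (_ : U :&: B = set0) ?cards0 ?cB; first lia.
by rewrite setIC; apply: disjoint_setI0; rewrite disjoints_subset.
Qed.

Lemma card_supersets (T : finType) (H : {set T}) k :
  #|[set A : {set T} | H \subset A & #|A| == k]| <= 'C(#|T| - #|H|, k - #|H|).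
Proof.
set S := [set A : {set T} | _ & _].
have inj : {in S &, injective (fun A => A :\: H)}.
  move=> A1 A2; rewrite !inE => /andP[H1 _] /andP[H2 _] e.
  by rewrite -(setID A1 H) -(setID A2 H) (setIidPr H1) (setIidPr H2) e.
rewrite -(card_in_imset inj) -(cardsC H) addKn -cards_draws.
apply: subset_leq_card; apply/subsetP=> _ /imsetP[A + ->].
rewrite !inE => /andP[HA /eqP <-].
by rewrite cardsD (setIidPr HA) eqxx setDE subsetIr.
Qed.

Lemma mem_act_fam m (g : {perm 'I_m}) (S : {set {set 'I_m}}) (A : {set 'I_m}) :
  (A \in act_fam g S) = ((fun a => g^-1%g a) @: A \in S).
Proof.
have imsetK (h : {perm 'I_m}) (B : {set 'I_m}) :
    (fun a => h^-1%g a) @: ((fun a => h a) @: B) = B.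
  by rewrite -imset_comp (eq_imset _ (permK h)) imset_id.
apply/imsetP/idP=> [[B SB ->] | SgA]; first by rewrite imsetK.
by exists ((fun a => g^-1%g a) @: A); rewrite // -{1}(invgK g) imsetK.
Qed.

Lemma supersets_not_self_separable m k
    (G : {set {perm 'I_m}}) (H : {set 'I_m}) :
  #|H| + #|H| <= k -> k <= m ->
  ~~ self_separable G [set A : {set 'I_m} | H \subset A & #|A| == k].
Proof.
move=> Hk km; apply/exists_inP=> -[g _]; apply/negP.
have [|A HgHA cA] := @exists_superset _ (H :|: (fun a => g a) @: H) k.
  by rewrite card_ord cardsU card_imset ?km ?andbT; [lia | exact: perm_inj].
have HA : H \subset A by apply: subset_trans HgHA; apply: subsetUl.
have HgA : H \subset (fun a => g^-1%g a) @: A.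
  apply/subsetP=> x Hx; apply/imsetP; exists (g x); last by rewrite permK.
  by apply: (subsetP HgHA); rewrite inE imset_f ?orbT.
apply/pred0Pn; exists A; rewrite /= mem_act_fam !inE HA HgA cA.
by rewrite (card_imset _ (@perm_inj _ g^-1%g)) cA eqxx.
Qed.

Lemma mSym_le_bin m k : k < m -> mSym m k <= 'C(m - k./2, uphalf k).
Proof.
move=> km; have [|H _ cH] := @exists_superset 'I_m set0 k./2.
  by rewrite cards0 card_ord; apply/andP; split=> //; lia.
have := odd_double_half k; rewrite -addnn => ek.
have cHk : #|H| + #|H| <= k by lia.
apply: (@leq_trans #|[set A : {set 'I_m} | H \subset A & #|A| == k]|).
  apply: mnum_le_card; last exact: supersets_not_self_separable (ltnW km).
  by apply/subsetP=> A; rewrite !inE => /andP[].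
apply: (leq_trans (card_supersets H k)).
by rewrite card_ord cH uphalf_half (_ : k - k./2 = odd k + k./2) //; lia.
Qed.

Lemma leq_exp2rW m n e : m <= n -> m ^ e <= n ^ e.
Proof. by case: e => // e mn; rewrite leq_exp2r. Qed.

Lemma ffactnD n a b : n ^_ (a + b) = n ^_ a * (n - a) ^_ b.
Proof.
elim: b => [|b IH]; first by rewrite addn0 ffactn0 muln1.
by rewrite addnS !ffactnSr IH subnDA mulnA.
Qed.

Lemma leq_ffact2r m n j : m <= n -> m ^_ j <= n ^_ j.
Proof.
by move=> mn; rewrite !ffact_prod; apply: leq_prod => i _; apply: leq_sub2r.
Qed.

Lemma ffact_le_expn n j : n ^_ j <= n ^ j.
Proof.
have -> : n ^ j = \prod_(i < j) n by rewrite prod_nat_const card_ord.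
by rewrite ffact_prod; apply: leq_prod => i _; apply: leq_subr.
Qed.

Lemma expn_le_ffact n j : (n.+1 - j) ^ j <= n ^_ j.
Proof.
have -> : (n.+1 - j) ^ j = \prod_(i < j) (n.+1 - j).
  by rewrite prod_nat_const card_ord.
rewrite ffact_prod; apply: leq_prod => i _; have := ltn_ord i; lia.
Qed.

Lemma ffact_subn_sqr_le n h : ((n - h) ^_ h) ^ 2 <= n ^_ (h + h).
Proof. by rewrite ffactnD leq_mul2r leq_ffact2r ?leq_subr ?orbT. Qed.

(* With [P := (n - h) ^_ h.+1] and [n ^_ (2h+1) = n ^_ h * P], this reduces to
   [P ^ h <= (n ^_ h) ^ h.+1], and both sides are compared with
   [(n - h) ^ (h * h.+1)]. *)
Lemma ffact_subn_exp_le n h :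
  ((n - h) ^_ h.+1) ^ (h + h).+1 <= (n ^_ (h + h).+1) ^ h.+1.
Proof.
rewrite -addnS ffactnD expnMn expnD leq_mul2r; apply/orP; right.
apply: (@leq_trans ((n - h) ^ (h.+1 * h))).
  by rewrite expnM leq_exp2rW // ffact_le_expn.
apply: (@leq_trans ((n.+1 - h) ^ (h * h.+1))).
  by rewrite mulnC leq_exp2rW // leq_sub2r.
by rewrite expnM leq_exp2rW // expn_le_ffact.
Qed.

Lemma Ffam_ind (P : pred nat) mX k n : P 0 ->
  (forall m, k < m -> 'C(m, k) = n -> P (mX m k)) -> P (Ffam mX k n).
Proof.
move=> P0 PmX; apply: (big_ind P) => // [x y Px Py | m /andP[km /eqP]].
  by case: leqP.
exact: PmX.
Qed.

Lemma Ffam_even_le mX h n :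
  (forall m, h + h < m -> mX m (h + h) <= 'C(m - h, h)) ->
  (Ffam mX (h + h) n * h`!) ^ 2 <= n * (h + h)`!.
Proof.
move=> mX_le.
pose P x := (x * h`!) ^ 2 <= n * (h + h)`!.
apply: (@Ffam_ind P mX _ n) => // m hm; rewrite /P => <-; rewrite bin_ffact.
apply: leq_trans (ffact_subn_sqr_le m h).
by rewrite -bin_ffact leq_exp2r // leq_mul2r mX_le ?orbT.
Qed.

Lemma Ffam_odd_le mX h n :
  (forall m, (h + h).+1 < m -> mX m (h + h).+1 <= 'C(m - h, h.+1)) ->
  (Ffam mX (h + h).+1 n * h.+1`!) ^ (h + h).+1 <= (n * (h + h).+1`!) ^ h.+1.
Proof.
move=> mX_le.
pose P x := (x * h.+1`!) ^ (h + h).+1 <= (n * (h + h).+1`!) ^ h.+1.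
apply: (@Ffam_ind P mX _ n) => [|m hm]; rewrite /P.
  by rewrite mul0n exp0n.
move=> <-; rewrite bin_ffact; apply: leq_trans (ffact_subn_exp_le m h).
by rewrite -bin_ffact leq_exp2r // leq_mul2r mX_le ?orbT.
Qed.

Section NatRatioBounds.
Variable R : realType.
Local Open Scope ring_scope.

Lemma natr_div_sqrt_le (x n K c : nat) :
  (0 < n)%N -> (0 < c)%N -> ((x * c) ^ 2 <= n * K)%N ->
  x%:R / Num.sqrt n%:R <= Num.sqrt K%:R / c%:R :> R.
Proof.
move=> n0 c0 xcnK.
rewrite ler_pdivrMr ?sqrtr_gt0 ?ltr0n // mulrAC ler_pdivlMr ?ltr0n //.
rewrite -sqrtrM ?ler0n // -(natrM _ x c) -[(x * c)%:R]ger0_norm ?ler0n //.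
rewrite -sqrtr_sqr ler_sqrt ?mulr_ge0 ?sqr_ge0 ?ler0n //.
by rewrite -natrX -natrM ler_nat [(K * n)%N]mulnC.
Qed.

Lemma natr_div_powR_le (x n K c d k : nat) :
  (0 < n)%N -> (0 < k)%N -> (0 < d)%N -> ((x * d) ^ k <= (n * K) ^ c)%N ->
  x%:R / n%:R `^ (c%:R / k%:R) <= K%:R `^ (c%:R / k%:R) / d%:R :> R.
Proof.
move=> n0 k0 d0 xdnK.
rewrite ler_pdivrMr ?powR_gt0 ?ltr0n // mulrAC ler_pdivlMr ?ltr0n //.
rewrite -powRM ?ler0n // -!natrM.
have -> : (x * d)%:R = ((x * d)%:R `^ k%:R) `^ k%:R^-1 :> R.
  by rewrite -powRrM mulfV ?pnatr_eq0 -?lt0n // powRr1 // ler0n.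
rewrite powRrM !powR_mulrn ?ler0n // -!natrX.
apply: ge0_ler_powR; rewrite ?invr_ge0 ?nnegrE ?ler0n //.
by rewrite ler_nat [(K * n)%N]mulnC.
Qed.

End NatRatioBounds.

Lemma mX_le_bin mX m k : (mX = mSym \/ mX = mAlt) -> k < m ->
  mX m k <= 'C(m - k./2, uphalf k).
Proof.
move=> [|] -> km; first exact: mSym_le_bin.
exact: leq_trans (mAlt_le_mSym m k) (mSym_le_bin km).
Qed.

Theorem lemma8p1 :
  (forall m k : nat, 2 <= k -> k < m ->
     mAlt m k <= mSym m k /\ mSym m k <= 'C(m - k./2, uphalf k))
  /\
  (forall (R : realType) (k : nat), 2 <= k ->
     forall mX, (mX = mSym \/ mX = mAlt) ->
     forall eps : R, (0 < eps)%R -> exists N : nat, forall n : nat,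
       (N <= n)%N -> is_degree k n ->
       (if ~~ odd k then
          ((Ffam mX k n)%:R / Num.sqrt (n%:R) <=
             Num.sqrt ((k`!)%:R) / ((k./2)`!)%:R + eps)%R
        else
          ((Ffam mX k n)%:R / powR (n%:R) ((k.+1)%:R / (2 * k)%:R) <=
             powR ((k`!)%:R) ((k.+1)%:R / (2 * k)%:R) / ((uphalf k)`!)%:R
               + eps)%R)).
Proof.
(* The bounds hold for every [k]. *)
split=> [m k _ km | R k _ mX hX eps eps0].
  by split; [exact: mAlt_le_mSym | exact: mSym_le_bin].
have [h [-> | ->]] : exists h, k = h + h \/ k = (h + h).+1.
  exists k./2; have := odd_double_half k; rewrite -addnn.
  by case: (odd k) => ?; [right | left]; lia.
- have [oddF halfE uphalfE] :
    [/\ odd (h + h) = false, (h + h)./2 = h & uphalf (h + h) = h].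
    by rewrite addnn odd_double doubleK uphalf_double.
  exists 0 => _ _ [m hm <-]; rewrite oddF halfE /= -[leLHS]addr0.
  apply: lerD (ltW eps0).
  apply: natr_div_sqrt_le; [by rewrite bin_gt0 ltnW | exact: fact_gt0 |].
  apply: Ffam_even_le => m' hm'.
  by have := mX_le_bin hX hm'; rewrite halfE uphalfE.
- have [oddT halfE uphalfE] :
    [/\ odd (h + h).+1, ((h + h).+1)./2 = h & uphalf (h + h).+1 = h.+1].
    by rewrite /= addnn odd_double uphalf_double doubleK.
  have expE :
      ((h + h).+2%:R / (2 * (h + h).+1)%:R = h.+1%:R / (h + h).+1%:R :> R)%R.
    rewrite (_ : (h + h).+2 = 2 * h.+1); last by lia.
    by rewrite !natrM -mulf_div divff ?mul1r // pnatr_eq0.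
  exists 0 => _ _ [m hm <-]; rewrite oddT uphalfE expE /= -[leLHS]addr0.
  apply: lerD (ltW eps0).
  apply: natr_div_powR_le => //;
    [by rewrite bin_gt0 ltnW | exact: fact_gt0 |].
  apply: Ffam_odd_le => m' hm'.
  by have := mX_le_bin hX hm'; rewrite halfE uphalfE.
Qed.
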